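(* For every composition $\lambda=(\lambda_1,\dots,\lambda_\ell)$ of $n$ and every tuple of integers $\mathbf{k}=(k_1,\dots,k_\ell)$, the weighted permutation module $M(\lambda,\mathbf{k})$ has a one-dimensional space of $S_n$-invariants.
   Context: Let $T\subset GL_n(\mathbb{C})$ be the diagonal torus, $S_n$ the subgroup of permutation matrices, and $T\rtimes S_n\cong\mathbb{C}^\times\wr S_n$ the monomial matrices. For a partition $\lambda$ of $r$ and integer $k$, $S^{\lambda,k}$ is the representation of $\mathbb{C}^\times\wr S_r$ on the Specht module $S^\lambda$ with each copy of $\mathbb{C}^\times$ acting by $z\mapsto z^k$. The weighted permutation module is $$M(\lambda,\mathbf{k}):=\mathrm{Ind}_{(\mathbb{C}^\times\wr S_{\lambda_1})\times\dots\times(\mathbb{C}^\times\wr S_{\lambda_\ell})}^{\mathbb{C}^\times\wr S_n}\left(S^{(\lambda_1),k_1}\otimes\dots\otimes S^{(\lambda_\ell),k_\ell}\right),$$ the product subgroup being block diagonal. *)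

From HB Require Import structures.
From mathcomp Require Import all_boot all_order all_algebra all_fingroup.
From mathcomp Require Import reals complex.
Set Implicit Arguments. Unset Strict Implicit. Unset Printing Implicit Defensive.
Import Order.TTheory GRing.Theory Num.Theory.
Local Open Scope ring_scope.

Definition is_composition (n : nat) (lam : seq nat) : bool :=
  all (fun m => 0 < m)%N lam && (sumn lam == n).

(* Index (0-based) of the block of lam containing position i:
   the number of prefix sums lam_1 + ... + lam_(j+1) that are <= i. *)
Definition blk (lam : seq nat) (i : nat) : nat :=
  (\sum_(j < size lam) (sumn (take j.+1 lam) <= i)%N)%N.

Section Monomial.
Variables (F : fieldType) (n : nat).

(* monomial matrix D_t P_s, with (P_s) i j = (s i == j) *)
Definition monomial (t : 'I_n -> F) (s : 'S_n) : 'M[F]_n :=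
  diag_mx (\row_i t i) *m perm_mx s.

(* The group C^x wr S_n = T x| S_n, as the set of invertible monomial matrices. *)
Definition in_wreath (g : 'M[F]_n) : Prop :=
  exists (t : 'I_n -> F) (s : 'S_n), (forall i, t i != 0) /\ g = monomial t s.

(* The block-diagonal subgroup (C^x wr S_lam_1) x ... x (C^x wr S_lam_l). *)
Definition in_young (lam : seq nat) (g : 'M[F]_n) : Prop :=
  exists (t : 'I_n -> F) (s : 'S_n),
    [/\ forall i, t i != 0, forall i, blk lam (s i) = blk lam i & g = monomial t s].

(* The character of S^{(lam_1),k_1} (x) ... (x) S^{(lam_l),k_l} on the block-diagonal
   subgroup: the one-row Specht modules S^{(m)} are trivial one-dimensional, and each
   copy of C^x in block j acts by z |-> z^(k_j).  The diagonal entry t_i of h = D_t P_s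
   is recovered as the (unique nonzero) entry sum of row i. *)
Definition young_char (lam : seq nat) (k : seq int) (h : 'M[F]_n) : F :=
  \prod_(i < n) (\sum_(j < n) h i j) ^ (nth 0%Z k (blk lam i)).

(* The weighted permutation module M(lam,k) = Ind_H^G chi, in the function model:
   functions f on G with f(h g) = chi(h) f(g) for h in H, G acting by right translation
   (x . f)(g) = f(g x).  (Values of f outside G are irrelevant.) *)
Definition in_M (lam : seq nat) (k : seq int) (f : 'M[F]_n -> F) : Prop :=
  forall h g, in_young lam h -> in_wreath g -> f (h *m g) = young_char lam k h * f g.

Definition Sn_invariant (f : 'M[F]_n -> F) : Prop :=
  forall (s : 'S_n) g, in_wreath g -> f (g *m perm_mx s) = f g.

Definition in_invariants (lam : seq nat) (k : seq int) (f : 'M[F]_n -> F) : Prop :=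
  in_M lam k f /\ Sn_invariant f.

Definition one_dimensional (V : ('M[F]_n -> F) -> Prop) : Prop :=
  exists f0, V f0 /\ (exists g, in_wreath g /\ f0 g != 0) /\
     forall f, V f -> exists c : F, forall g, in_wreath g -> f g = c * f0 g.

End Monomial.

From HB Require Import structures.
From mathcomp Require Import all_boot all_order all_algebra all_fingroup.
From mathcomp Require Import reals complex.
Import Order.TTheory GRing.Theory Num.Theory.
Local Open Scope ring_scope.
Local Open Scope complex_scope.

(* The diagonal torus T lies in the Young subgroup H and G = T S_n, so an
   S_n-invariant f of Ind_H^G chi satisfies f(D_t P_s) = f(D_t) = chi(D_t) f(1):
   it is determined by f(1).  Conversely g |-> chi(D_t) for g = D_t P_s is such an
   invariant, equal to 1 at the identity.  In the matrix model this function is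
   young_char itself, since row sums of a monomial matrix are its diagonal
   entries and are unchanged by right multiplication with a permutation matrix. *)

Section WeightedPermutationModule.
Variables (F : fieldType) (n : nat).
Implicit Types (t : 'I_n -> F) (s : 'S_n) (A B : 'M[F]_n).

Definition row_sum A i : F := \sum_j A i j.

Lemma row_sum_mulmx_perm A s i : row_sum (A *m perm_mx s) i = row_sum A i.
Proof.
rewrite /row_sum -[s]invgK -col_permE (reindex_inj (@perm_inj _ s)) /=.
by apply: eq_bigr => j _; rewrite mxE permK.
Qed.

Lemma row_sum_monomial_mul t s B i :
  row_sum (monomial t s *m B) i = t i * row_sum B (s i).
Proof.
rewrite /row_sum /monomial -mulmxA -row_permE mul_diag_mx mulr_sumr.
by apply: eq_bigr => j _; rewrite !mxE.
Qed.

Lemma row_sum1 i : row_sum (1%:M : 'M[F]_n) i = 1.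
Proof.
rewrite /row_sum (bigD1 i) //= mxE eqxx big1 ?addr0 // => j /negbTE neq_ji.
by rewrite mxE eq_sym neq_ji.
Qed.

Lemma row_sum_monomial t s i : row_sum (monomial t s) i = t i.
Proof. by rewrite -[monomial t s]mulmx1 row_sum_monomial_mul row_sum1 mulr1. Qed.

Lemma monomial1 : monomial (fun _ : 'I_n => 1 : F) 1%g = 1%:M.
Proof.
rewrite /monomial perm_mx1 mulmx1.
by apply/matrixP => i j; rewrite !mxE; case: (i == j); rewrite ?mulr1n ?mulr0n.
Qed.

Lemma monomialE t s : monomial t s = monomial t 1%g *m perm_mx s.
Proof. by rewrite /monomial perm_mx1 mulmx1. Qed.

Lemma in_wreath1 : in_wreath (1%:M : 'M[F]_n).
Proof. by exists (fun => 1), 1%g; rewrite monomial1; split => // i; apply: oner_neq0. Qed.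

Lemma in_wreath_diag t : (forall i, t i != 0) -> in_wreath (monomial t 1%g).
Proof. by move=> t_neq0; exists t, 1%g. Qed.

Lemma in_young_diag lam t :
  (forall i, t i != 0) -> in_young lam (monomial t 1%g).
Proof. by move=> t_neq0; exists t, 1%g; split => // i; rewrite perm1. Qed.

Section YoungCharacter.
Variables (lam : seq nat) (k : seq int).

Lemma young_charE A :
  young_char lam k A = \prod_i row_sum A i ^ nth 0%Z k (blk lam i).
Proof. by []. Qed.

Lemma young_char_mulmx_perm A s :
  young_char lam k (A *m perm_mx s) = young_char lam k A.
Proof. by rewrite !young_charE; apply: eq_bigr => i _; rewrite row_sum_mulmx_perm. Qed.

Lemma young_char1 : young_char lam k (1%:M : 'M[F]_n) = 1.
Proof.
by rewrite young_charE big1 // => i _; rewrite row_sum1 exp1rz.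
Qed.

Lemma young_charM h B :
  in_young lam h -> young_char lam k (h *m B) = young_char lam k h * young_char lam k B.
Proof.
case=> t [s [_ s_blk ->]]; rewrite !young_charE.
under eq_bigr => i _ do rewrite row_sum_monomial_mul expfzMl.
rewrite big_split /=; congr (_ * _).
  by apply: eq_bigr => i _; rewrite row_sum_monomial.
rewrite [RHS](reindex_inj (@perm_inj _ s)) /=.
by apply: eq_bigr => i _; rewrite s_blk.
Qed.

Lemma young_char_in_invariants : in_invariants lam k (young_char (F := F) (n := n) lam k).
Proof.
split=> [h g h_young _ | s g _]; first exact: young_charM.
exact: young_char_mulmx_perm.
Qed.

Lemma invariant_on_wreath (f : 'M[F]_n -> F) g :
  in_invariants lam k f -> in_wreath g -> f g = f 1%:M * young_char lam k g.
Proof.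
move=> [fM fS] [t [s [t_neq0 ->]]].
rewrite monomialE fS; last exact: in_wreath_diag.
rewrite young_char_mulmx_perm -[monomial t 1%g in LHS]mulmx1 fM.
- by rewrite mulrC.
- exact: in_young_diag.
- exact: in_wreath1.
Qed.

End YoungCharacter.
End WeightedPermutationModule.

Theorem lemma3p2 (R : realType) (n : nat) (lam : seq nat) (k : seq int) :
  is_composition n lam -> size k = size lam ->
  one_dimensional (in_invariants (F := R[i]) (n := n) lam k).
Proof.
move=> _ _; exists (young_char lam k); split; first exact: young_char_in_invariants.
split.
  by exists 1%:M; rewrite young_char1 oner_neq0; split; first exact: in_wreath1.
by move=> f f_inv; exists (f 1%:M) => g; exact: invariant_on_wreath.
Qed.
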